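(* Let $\tilde u\in T^1\mathbb H$ be tangent to an oriented pair $(\tilde H,p)$. Then $|\tau_{\tilde H,p,\tilde u}|\le \ell(\tilde H,p)$.
   Context: $\mathbb H$ is the hyperbolic plane with distance $d$; for $v\in T^1\mathbb H$, $t\mapsto v(t)$ is the unit-speed geodesic with initial vector $v$ and $v(+\infty)$ its forward endpoint. Busemann function: $B_\xi(x,y)=\lim_{t\to\infty}(d(x,c(t))-d(y,c(t)))$ for any geodesic ray $c$ converging to $\xi\in\partial\mathbb H$. Let $\tilde H$ be a horocycle and $p$ a parabolic isometry preserving $\tilde H$. The translation length $\ell(\tilde H,p)$ is the length of the horocyclic arc between $x$ and $px$, for any $x\in\tilde H$. The positive orientation of $\tilde H$ relative to $p$ is that of an arc-length parametrization $s\mapsto\tilde H(s)$ with $p\tilde H(s)=\tilde H(s+\ell(\tilde H,p))$ for all $s$. A vector $\tilde u$ is tangent to the oriented pair $(\tilde H,p)$ if the geodesic ray $\tilde u(\mathbb R^+)$ is tangent to $\tilde H$ at a point $\tilde u(t_0)=\tilde H(s_0)$ (with $t_0\ge 0$) and $\frac{d\tilde u}{dt}(t_0)=\frac{d\tilde H}{ds}(s_0)$ for a positively oriented arc-length parametrization. The winding time is $\tau_{\tilde H,p,\tilde u}=B_{\tilde u(+\infty)}(p^{-1}\tilde u(0),\tilde u(0))$. *)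

From Stdlib Require Import Reals.
From Coquelicot Require Import Coquelicot.
Open Scope R_scope.

(* Upper half-plane model of the hyperbolic plane: points (x,y) with y > 0. *)
Definition pt : Type := (R * R)%type.
Definition inH (z : pt) : Prop := 0 < snd z.

(* acosh u = ln (u + sqrt (u^2 - 1)) *)
Definition hdist (z w : pt) : R :=
  let u := 1 + ((fst z - fst w) ^ 2 + (snd z - snd w) ^ 2)
               / (2 * snd z * snd w) in
  ln (u + sqrt (u * u - 1)).

(* A unit-speed geodesic line t |-> c t.  A unit tangent vector v is
   identified with its geodesic t |-> v(t), with base point v(0). *)
Definition geodesic (c : R -> pt) : Prop :=
  (forall t, inH (c t)) /\ (forall s t, hdist (c s) (c t) = Rabs (s - t)).

Definition busemann (c : R -> pt) (x y : pt) : R :=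
  real (Lim (fun t => hdist x (c t) - hdist y (c t)) p_infty).

(* Horocycles: the zero level set of a Busemann function, i.e. the
   horocycle centered at c(+oo) passing through c(0). *)
Definition horocycle (Hc : pt -> Prop) : Prop :=
  exists c, geodesic c /\
    forall z, Hc z <-> (inH z /\ busemann c z (c 0) = 0).

Definition isometry (f : pt -> pt) : Prop :=
  (forall z, inH z -> inH (f z)) /\
  (forall w, inH w -> exists z, inH z /\ f z = w) /\
  (forall z w, inH z -> inH w -> hdist (f z) (f w) = hdist z w).

Definition parabolic (f : pt -> pt) : Prop :=
  isometry f /\
  (forall z, inH z -> f z <> z) /\
  (forall eps, 0 < eps -> exists z, inH z /\ hdist z (f z) < eps).

Definition preserves (f : pt -> pt) (Hc : pt -> Prop) : Prop :=
  forall z, inH z -> (Hc (f z) <-> Hc z).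

Definition arclength_param (Hc : pt -> Prop) (h : R -> pt) : Prop :=
  (forall s, Hc (h s)) /\
  (forall z, Hc z -> exists s, h s = z) /\
  (forall s s', h s = h s' -> s = s') /\
  (forall s, ex_derive (fun t => fst (h t)) s /\
             ex_derive (fun t => snd (h t)) s /\
             sqrt ((Derive (fun t => fst (h t)) s) ^ 2 +
                   (Derive (fun t => snd (h t)) s) ^ 2) = snd (h s)).

(* h is a positively oriented arc-length parametrization of Hc relative
   to p, and l = ell(Hc,p) is the translation length (the hyperbolic arc
   length between h s and p (h s) = h (s + l), which equals l >= 0). *)
Definition pos_oriented_param (Hc : pt -> Prop) (p : pt -> pt)
    (h : R -> pt) (l : R) : Prop :=
  arclength_param Hc h /\ 0 <= l /\ (forall s, p (h s) = h (s + l)).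

(* u is tangent to the oriented pair (Hc,p) (with orientation given by h). *)
Definition tangent_to (u : R -> pt) (h : R -> pt) : Prop :=
  exists t0 s0, 0 <= t0 /\ u t0 = h s0 /\
    ex_derive (fun t => fst (u t)) t0 /\ ex_derive (fun t => snd (u t)) t0 /\
    Derive (fun t => fst (u t)) t0 = Derive (fun t => fst (h t)) s0 /\
    Derive (fun t => snd (u t)) t0 = Derive (fun t => snd (h t)) s0.

(* winding time tau = B_{u(+oo)}(p^{-1} u(0), u(0)); pinv_u0 = p^{-1}(u 0). *)
Definition winding_time (u : R -> pt) (pinv_u0 : pt) : R :=
  busemann u pinv_u0 (u 0).

From Stdlib Require Import Reals Lra Psatz.
From Coquelicot Require Import Coquelicot.
Open Scope R_scope.

(* Work in the hyperboloid model: [hyp] maps the upper half-plane isometrically onto the sheet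
   [<X, X> = 1, X_0 > 0] of Minkowski space R^{1,2}, with [cosh (hdist z w) = <hyp z, hyp w>].
   A unit-speed geodesic is [t |-> cosh t P + sinh t E], and its Busemann function is
   [B (x, c 0) = ln <hyp x, P + E>] for the null vector [P + E]; so a horocycle is a level set
   [<X, N> = 1] of a null vector [N], and its arc-length parametrizations are the parabolas
   [X0 + r V + r^2/2 N] with [V] the unit tangent at [X0].
   If [u] touches the horocycle at [u t0 = h s0], isometry of [p] says that [p^-1 (u 0)] has the
   same inner products with the points of the horocycle as [u 0], shifted by [l]; comparing
   coefficients gives [exp tau = 1 + l + l^2/2 * cosh t0 * exp (- t0)], and since
   [0 < cosh t0 * exp (- t0) <= 1] for [t0 >= 0] this lies between [1] and [exp l]. *)

(** * Real analysis *)

Lemma cosh_sq_sub_sinh_sq x : cosh x ^ 2 - sinh x ^ 2 = 1.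
Proof. unfold cosh, sinh. rewrite exp_Ropp. pose proof (exp_pos x). field. lra. Qed.

Lemma cosh_sub x y : cosh (x - y) = cosh x * cosh y - sinh x * sinh y.
Proof.
  unfold cosh, sinh, Rminus. rewrite Ropp_plus_distr, Ropp_involutive, !exp_plus, !exp_Ropp.
  pose proof (exp_pos x). pose proof (exp_pos y). field. lra.
Qed.

Lemma cosh_Rabs x : cosh (Rabs x) = cosh x.
Proof.
  unfold cosh. destruct (Rle_dec 0 x).
  - rewrite Rabs_right; lra.
  - rewrite Rabs_left, Ropp_involutive; lra.
Qed.

Lemma cosh_acosh q : 1 <= q -> cosh (ln (q + sqrt (q * q - 1))) = q.
Proof.
  intros Hq. assert (Hs : 0 <= q * q - 1) by nra.
  pose proof (sqrt_sqrt _ Hs). pose proof (sqrt_pos (q * q - 1)).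
  set (s := sqrt (q * q - 1)) in *.
  assert (Hinv : / (q + s) = q - s).
  { apply Rmult_eq_reg_l with (q + s); [rewrite Rinv_r; nra | lra]. }
  unfold cosh. rewrite exp_Ropp, exp_ln, Hinv by lra. lra.
Qed.

Lemma sinh_1_pos : 0 < sinh 1.
Proof. rewrite <- sinh_0. apply sinh_lt. lra. Qed.

Lemma is_derive_sign_quotient (f : R -> R) x d : is_derive f x d -> d <> 0 ->
  exists del, 0 < del /\ forall h, h <> 0 -> Rabs h < del -> 0 < (f (x + h) - f x) / h * d.
Proof.
  intros Hd Hn. apply is_derive_Reals in Hd.
  assert (He : 0 < Rabs d / 2) by (apply Rabs_pos_lt in Hn; lra).
  destruct (Hd _ He) as [del Hdel]. exists del. split; [apply cond_pos |].
  intros h Hh Hh'. specialize (Hdel h Hh Hh').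
  set (q := (f (x + h) - f x) / h) in *.
  destruct (Rle_dec 0 d).
  - rewrite (Rabs_right d) in Hdel by lra. apply Rabs_def2 in Hdel. nra.
  - rewrite (Rabs_left d) in Hdel by lra. apply Rabs_def2 in Hdel. nra.
Qed.

Lemma is_derive_exceeds (f : R -> R) x d eps : is_derive f x d -> d <> 0 -> 0 < eps ->
  exists y, 0 < (y - x) * d /\ Rabs (y - x) < eps /\ f x < f y.
Proof.
  intros Hd Hn He. destruct (is_derive_sign_quotient f x d Hd Hn) as [del [Hdel Hq]].
  set (k := Rmin del eps / 2).
  assert (Hk : 0 < k /\ k < del /\ k < eps).
  { unfold k. pose proof (Rmin_l del eps). pose proof (Rmin_r del eps).
    pose proof (Rmin_pos del eps Hdel He). lra. }
  set (h := if Rlt_dec 0 d then k else - k).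
  assert (Hh : 0 < h * d /\ Rabs h = k).
  { unfold h. destruct (Rlt_dec 0 d).
    - rewrite Rabs_right by lra. split; [nra | reflexivity].
    - rewrite Rabs_Ropp, Rabs_right by lra. split; [nra | reflexivity]. }
  exists (x + h). replace (x + h - x) with h by ring.
  assert (Hh0 : h <> 0) by (intro; subst; nra).
  specialize (Hq h Hh0 ltac:(lra)).
  set (q := (f (x + h) - f x) / h) in Hq.
  assert (Hfq : f (x + h) - f x = q * h) by (unfold q; field; exact Hh0).
  split; [lra | split; [lra |]].
  assert (0 < q * h * (d * d)) by (replace (q * h * (d * d)) with ((q * d) * (h * d)) by ring; nra).
  assert (0 < d * d) by nra. nra.
Qed.

(* The maximum of [f] on [[a, b]] is at neither endpoint, so [f'] vanishes there. *)
Lemma is_derive_darboux_zero (f df : R -> R) a b : a < b -> (forall x, is_derive f x (df x)) ->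
  0 < df a -> df b < 0 -> exists c, a < c < b /\ df c = 0.
Proof.
  intros Hab Hd Ha Hb.
  assert (Hpr : forall x, derivable_pt f x) by (intro x; exists (df x); apply is_derive_Reals, Hd).
  destruct (continuity_ab_maj f a b) as [m [Hmax Hm]];
    [lra | intros x _; apply derivable_continuous_pt, Hpr |].
  assert (Hma : m <> a).
  { intros ->. destruct (is_derive_exceeds f a (df a) (b - a) (Hd a)) as (y & Hy1 & Hy2 & Hy3);
      [lra | lra |].
    apply Rabs_def2 in Hy2. specialize (Hmax y). nra. }
  assert (Hmb : m <> b).
  { intros ->. destruct (is_derive_exceeds f b (df b) (b - a) (Hd b)) as (y & Hy1 & Hy2 & Hy3);
      [lra | lra |].
    apply Rabs_def2 in Hy2. specialize (Hmax y). nra. }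
  exists m. split; [lra |].
  rewrite <- (derive_pt_eq_0 f m (df m) (Hpr m)) by apply is_derive_Reals, Hd.
  apply (deriv_maximum f a b); [lra | lra |]. intros x Hx1 Hx2. apply Hmax. lra.
Qed.

Lemma is_derive_pm1_affine (f df : R -> R) s0 : (forall x, is_derive f x (df x)) ->
  (forall x, df x = 1 \/ df x = -1) -> df s0 = 1 -> forall s, f s = f s0 + (s - s0).
Proof.
  intros Hd Hpm H0.
  assert (Hone : forall s, df s = 1).
  { intro s. destruct (Hpm s) as [|Hs]; [assumption | exfalso].
    destruct (Rtotal_order s0 s) as [Hlt | [-> | Hgt]]; [| lra |].
    - destruct (is_derive_darboux_zero f df s0 s) as (c & _ & Hc); try assumption; try lra.
      destruct (Hpm c); lra.
    - destruct (is_derive_darboux_zero (fun x => - f x) (fun x => - df x) s s0) as (c & _ & Hc);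
        try lra.
      + intro x. apply (is_derive_opp f x (df x)), Hd.
      + destruct (Hpm c); lra. }
  assert (Hg : forall x, is_derive (fun y => f y - y) x 0).
  { intro x. replace 0 with (df x - 1) by (rewrite Hone; ring).
    exact (is_derive_minus f (fun y => y) x (df x) 1 (Hd x) (is_derive_id x)). }
  assert (Hpr : derivable (fun x => f x - x)) by (intro x; exists 0; apply is_derive_Reals, Hg).
  intro s. enough (f s - s = f s0 - s0) by lra.
  apply (null_derivative_1 _ Hpr). intro x. apply derive_pt_eq_0, is_derive_Reals, Hg.
Qed.

(** * Minkowski space R^{1,2} *)

Record mvec := Mvec { m0 : R; m1 : R; m2 : R }.

Definition mdot (a b : mvec) : R := m0 a * m0 b - m1 a * m1 b - m2 a * m2 b.

Definition mlin (k : R) (a : mvec) (k' : R) (b : mvec) : mvec :=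
  Mvec (k * m0 a + k' * m0 b) (k * m1 a + k' * m1 b) (k * m2 a + k' * m2 b).

Lemma mvec_ext a b : m0 a = m0 b -> m1 a = m1 b -> m2 a = m2 b -> a = b.
Proof. destruct a, b; simpl; intros; subst; reflexivity. Qed.

Lemma mlin_sub_eq0 a b : mlin 1 a (-1) b = Mvec 0 0 0 -> a = b.
Proof.
  intros E. apply mvec_ext;
    [apply (f_equal m0) in E | apply (f_equal m1) in E | apply (f_equal m2) in E];
    simpl in E; lra.
Qed.

Lemma mdot_sym a b : mdot a b = mdot b a.
Proof. unfold mdot. ring. Qed.

Lemma mdot_mlinr a k x k' y : mdot a (mlin k x k' y) = k * mdot a x + k' * mdot a y.
Proof. unfold mdot, mlin; simpl. ring. Qed.

Lemma mdot_mlinl a k x k' y : mdot (mlin k x k' y) a = k * mdot x a + k' * mdot y a.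
Proof. unfold mdot, mlin; simpl. ring. Qed.

Lemma cauchy_schwarz2 a b c d : (a * c + b * d) ^ 2 <= (a * a + b * b) * (c * c + d * d).
Proof. assert (0 <= (a * d - b * c) ^ 2) by apply pow2_ge_0. nra. Qed.

Lemma timelike_orth_null_zero T Q :
  0 < mdot T T -> mdot Q T = 0 -> mdot Q Q = 0 -> Q = Mvec 0 0 0.
Proof.
  destruct T as [a b c], Q as [q0 q1 q2]; unfold mdot; simpl. intros HT HQT HQQ.
  pose proof (cauchy_schwarz2 b c q1 q2) as Hcs.
  replace (b * q1 + c * q2) with (a * q0) in Hcs by lra.
  replace (q1 * q1 + q2 * q2) with (q0 * q0) in Hcs by lra.
  assert (Hq0 : q0 * q0 * (a * a - b * b - c * c) <= 0) by nra.
  assert (q0 * q0 <= 0) by nra.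
  assert (q0 = 0) by nra. subst.
  assert (q1 = 0 /\ q2 = 0) as [-> ->] by (split; nra). reflexivity.
Qed.

Lemma null_future N P :
  0 < m0 P -> mdot P P = 1 -> mdot N N = 0 -> mdot N P = 1 -> 0 < m0 N.
Proof.
  destruct P as [p0 p1 p2], N as [n0 n1 n2]; unfold mdot; simpl. intros Hp HP HN HNP.
  destruct (Rle_dec n0 0) as [Hle|]; [exfalso|lra].
  pose proof (cauchy_schwarz2 n1 n2 p1 p2) as Hcs.
  replace (n1 * p1 + n2 * p2) with (n0 * p0 - 1) in Hcs by lra.
  replace (n1 * n1 + n2 * n2) with (n0 * n0) in Hcs by lra.
  replace (p1 * p1 + p2 * p2) with (p0 * p0 - 1) in Hcs by lra. nra.
Qed.

Lemma mdot_future_null_pos Y N :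
  0 < m0 Y -> mdot Y Y = 1 -> mdot N N = 0 -> 0 < m0 N -> 0 < mdot Y N.
Proof.
  destruct Y as [y0 y1 y2], N as [n0 n1 n2]; unfold mdot; simpl. intros Hy HY HN Hn.
  pose proof (cauchy_schwarz2 n1 n2 y1 y2) as Hcs.
  replace (n1 * n1 + n2 * n2) with (n0 * n0) in Hcs by lra.
  replace (y1 * y1 + y2 * y2) with (y0 * y0 - 1) in Hcs by lra.
  assert (Hlt : (n1 * y1 + n2 * y2) ^ 2 < (n0 * y0) ^ 2) by nra.
  assert (0 < n0 * y0) by nra. nra.
Qed.

Definition mcross (N X : mvec) : R := m1 X * m2 N - m2 X * m1 N.

(* On the orthogonal complement of a null vector the form is degenerate of rank one. *)
Lemma mdot_null_perp N D W :
  mdot N N = 0 -> mdot D N = 0 -> mdot W N = 0 ->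
  m0 N ^ 2 * mdot D W = - (mcross N D * mcross N W).
Proof.
  destruct N as [n0 n1 n2], D as [d0 d1 d2], W as [w0 w1 w2]; unfold mdot, mcross; cbn [m0 m1 m2].
  intros HN HD HW.
  replace (n0 ^ 2 * (d0 * w0 - d1 * w1 - d2 * w2))
    with ((d0 * n0) * (w0 * n0) - (n0 * n0) * (d1 * w1 + d2 * w2)) by ring.
  replace (d0 * n0) with (d1 * n1 + d2 * n2) by lra.
  replace (w0 * n0) with (w1 * n1 + w2 * n2) by lra.
  replace (n0 * n0) with (n1 * n1 + n2 * n2) by lra. ring.
Qed.

Lemma null_perp_unit_mdot_sq N V D :
  m0 N <> 0 -> mdot N N = 0 -> mdot V V = -1 -> mdot V N = 0 ->
  mdot D D = -1 -> mdot D N = 0 -> mdot D V ^ 2 = 1.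
Proof.
  intros Hn HN HVV HVN HDD HDN.
  pose proof (mdot_null_perp N V V HN HVN HVN) as AV.
  pose proof (mdot_null_perp N D D HN HDN HDN) as AD.
  pose proof (mdot_null_perp N D V HN HDN HVN) as ADV.
  rewrite HVV in AV. rewrite HDD in AD.
  assert (Hn2 : 0 < m0 N ^ 2) by (apply pow2_gt_0; exact Hn).
  apply Rmult_eq_reg_l with (m0 N ^ 2 * m0 N ^ 2); [|nra].
  replace (m0 N ^ 2 * m0 N ^ 2 * mdot D V ^ 2) with ((m0 N ^ 2 * mdot D V) ^ 2) by ring.
  rewrite ADV. nra.
Qed.

Lemma null_frame_orth_zero X V N Q :
  m0 N <> 0 -> mdot N N = 0 -> mdot V V = -1 -> mdot V N = 0 -> mdot X N = 1 ->
  mdot Q N = 0 -> mdot Q V = 0 -> mdot Q X = 0 -> Q = Mvec 0 0 0.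
Proof.
  intros Hn HN HVV HVN HXN HQN HQV HQX.
  pose proof (mdot_null_perp N Q V HN HQN HVN) as AQ.
  pose proof (mdot_null_perp N V V HN HVN HVN) as AV.
  rewrite HQV in AQ. rewrite HVV in AV.
  assert (Hn2 : 0 < m0 N ^ 2) by (apply pow2_gt_0; exact Hn).
  assert (Hc : mcross N Q = 0).
  { destruct (Rmult_integral (mcross N Q) (mcross N V)) as [|HV]; [lra|assumption|].
    rewrite HV in AV. lra. }
  clear AQ AV.
  rewrite mdot_sym in HXN.
  destruct N as [n0 n1 n2], Q as [q0 q1 q2], X as [x0 x1 x2];
    unfold mdot, mcross in *; cbn [m0 m1 m2] in *.
  (* [Q] is orthogonal to [N] and has the same spatial direction, so [Q = (q0/n0) N]. *)
  assert (E1 : q1 * n0 = q0 * n1).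
  { apply Rmult_eq_reg_l with n0; [|exact Hn].
    replace (n0 * (q0 * n1)) with (n1 * (q0 * n0)) by ring.
    replace (q0 * n0) with (q1 * n1 + q2 * n2) by lra.
    transitivity (n1 * (q1 * n1 + q2 * n2) + q1 * (n0 * n0 - n1 * n1 - n2 * n2)
                  + n2 * (q1 * n2 - q2 * n1)); [ring | rewrite HN, Hc; ring]. }
  assert (E2 : q2 * n0 = q0 * n2).
  { apply Rmult_eq_reg_l with n0; [|exact Hn].
    replace (n0 * (q0 * n2)) with (n2 * (q0 * n0)) by ring.
    replace (q0 * n0) with (q1 * n1 + q2 * n2) by lra.
    transitivity (n2 * (q1 * n1 + q2 * n2) + q2 * (n0 * n0 - n1 * n1 - n2 * n2)
                  - n1 * (q1 * n2 - q2 * n1)); [ring | rewrite HN, Hc; ring]. }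
  assert (Hq0 : q0 = 0).
  { replace q0 with (q0 * (n0 * x0 - n1 * x1 - n2 * x2)) by (rewrite HXN; ring).
    apply Rmult_eq_reg_l with n0; [|exact Hn].
    replace (n0 * (q0 * (n0 * x0 - n1 * x1 - n2 * x2)))
      with (n0 * (q0 * n0 * x0) - (q0 * n1) * n0 * x1 - (q0 * n2) * n0 * x2) by ring.
    rewrite <- E1, <- E2. nra. }
  subst q0. f_equal; apply Rmult_eq_reg_l with n0; auto; lra.
Qed.

(** * The hyperboloid model *)

Definition hyp (z : pt) : mvec :=
  Mvec ((fst z ^ 2 + snd z ^ 2 + 1) / (2 * snd z)) (fst z / snd z)
       ((fst z ^ 2 + snd z ^ 2 - 1) / (2 * snd z)).

Lemma mdot_hyp z w : inH z -> inH w ->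
  mdot (hyp z) (hyp w) =
  1 + ((fst z - fst w) ^ 2 + (snd z - snd w) ^ 2) / (2 * snd z * snd w).
Proof. unfold inH, mdot, hyp; cbn [m0 m1 m2]. intros. field. lra. Qed.

Lemma mdot_hyp_self z : inH z -> mdot (hyp z) (hyp z) = 1.
Proof.
  intros Hz. rewrite mdot_hyp by exact Hz.
  rewrite !Rminus_diag. unfold Rdiv. ring.
Qed.

Lemma one_le_mdot_hyp z w : inH z -> inH w -> 1 <= mdot (hyp z) (hyp w).
Proof.
  unfold inH. intros Hz Hw. rewrite mdot_hyp by assumption.
  assert (0 <= ((fst z - fst w) ^ 2 + (snd z - snd w) ^ 2) / (2 * snd z * snd w)); [|lra].
  apply Rdiv_le_0_compat; [|nra].
  apply Rplus_le_le_0_compat; apply pow2_ge_0.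
Qed.

Lemma hyp_m0_pos z : inH z -> 0 < m0 (hyp z).
Proof. unfold inH, hyp; cbn [m0]. intros. apply Rdiv_lt_0_compat; nra. Qed.

Lemma hdist_mdot z w : inH z -> inH w ->
  hdist z w = ln (mdot (hyp z) (hyp w) + sqrt (mdot (hyp z) (hyp w) * mdot (hyp z) (hyp w) - 1)).
Proof. intros. rewrite mdot_hyp by assumption. reflexivity. Qed.

Lemma cosh_hdist z w : inH z -> inH w -> cosh (hdist z w) = mdot (hyp z) (hyp w).
Proof.
  intros. rewrite hdist_mdot by assumption. apply cosh_acosh, one_le_mdot_hyp; assumption.
Qed.

Lemma frame_expand P E X t :
  mdot P P = 1 -> mdot E E = -1 -> mdot P E = 0 ->
  mdot X X = 1 -> mdot X P = cosh t -> mdot X E = - sinh t ->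
  X = mlin (cosh t) P (sinh t) E.
Proof.
  intros HPP HEE HPE HXX HXP HXE.
  pose proof (cosh_sq_sub_sinh_sq t).
  apply mlin_sub_eq0, (timelike_orth_null_zero P); [lra| |].
  - rewrite mdot_mlinl, mdot_mlinl, HXP, HPP, (mdot_sym E), HPE. ring.
  - rewrite !mdot_mlinl, !mdot_mlinr, (mdot_sym P X), (mdot_sym E X), (mdot_sym E P),
      HXX, HXP, HXE, HPP, HEE, HPE. nra.
Qed.

Definition geodesic_frame (c : R -> pt) (E : mvec) : Prop :=
  mdot E E = -1 /\ mdot (hyp (c 0)) E = 0 /\
  forall t, hyp (c t) = mlin (cosh t) (hyp (c 0)) (sinh t) E.

Lemma geodesic_hyp c : geodesic c -> exists E, geodesic_frame c E.
Proof.
  intros [Hin Hd].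
  assert (HL : forall s t, mdot (hyp (c s)) (hyp (c t)) = cosh (s - t)).
  { intros s t. rewrite <- cosh_hdist by apply Hin. rewrite Hd. apply cosh_Rabs. }
  set (P := hyp (c 0)).
  pose proof sinh_1_pos as Hs1. pose proof (cosh_sq_sub_sinh_sq 1) as Hcs1.
  (* The normalized component of [hyp (c 1)] orthogonal to [hyp (c 0)]. *)
  set (E := mlin (/ sinh 1) (hyp (c 1)) (- cosh 1 / sinh 1) P).
  assert (HPP : mdot P P = 1) by (unfold P; rewrite HL, Rminus_diag; apply cosh_0).
  assert (HP1 : mdot P (hyp (c 1)) = cosh 1).
  { unfold P. rewrite HL, <- (cosh_Rabs (0 - 1)), Rabs_minus_sym, Rminus_0_r, Rabs_R1.
    reflexivity. }
  assert (H11 : mdot (hyp (c 1)) (hyp (c 1)) = 1) by (rewrite HL, Rminus_diag; apply cosh_0).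
  assert (HPE : mdot P E = 0).
  { unfold E. rewrite mdot_mlinr, HP1, HPP. field. lra. }
  assert (HEE : mdot E E = -1).
  { unfold E. rewrite !mdot_mlinl, !mdot_mlinr, (mdot_sym (hyp (c 1)) P), H11, HP1, HPP.
    field_simplify; [|lra]. replace (cosh 1 ^ 2) with (1 + sinh 1 ^ 2) by lra. field. lra. }
  exists E. split; [exact HEE | split; [exact HPE |]]. intro t.
  apply frame_expand; try assumption.
  - apply mdot_hyp_self, Hin.
  - unfold P. rewrite HL, Rminus_0_r. reflexivity.
  - unfold E. rewrite mdot_mlinr, HL, cosh_sub. unfold P. rewrite HL, Rminus_0_r. field. lra.
Qed.

Definition is_mderive (f : R -> mvec) (t : R) (D : mvec) : Prop :=
  is_derive (fun s => m0 (f s)) t (m0 D) /\ is_derive (fun s => m1 (f s)) t (m1 D) /\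
  is_derive (fun s => m2 (f s)) t (m2 D).

Lemma is_mderive_unique f t D D' : is_mderive f t D -> is_mderive f t D' -> D = D'.
Proof.
  intros (H0 & H1 & H2) (H0' & H1' & H2').
  apply mvec_ext; [apply is_derive_unique in H0, H0' | apply is_derive_unique in H1, H1'
                  | apply is_derive_unique in H2, H2']; congruence.
Qed.

Lemma is_mderive_mdot f t D W : is_mderive f t D -> is_derive (fun s => mdot (f s) W) t (mdot D W).
Proof.
  unfold is_mderive, mdot.
  set (f0 := fun s => m0 (f s)). set (f1 := fun s => m1 (f s)). set (f2 := fun s => m2 (f s)).
  intros (H0 & H1 & H2).
  apply is_derive_ext with (fun s => f0 s * m0 W - f1 s * m1 W - f2 s * m2 W); [reflexivity |].
  auto_derive.
  - repeat split; eexists; eassumption.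
  - change (fun x => f0 x) with f0; change (fun x => f1 x) with f1;
      change (fun x => f2 x) with f2.
    rewrite (is_derive_unique f0 t _ H0), (is_derive_unique f1 t _ H1),
      (is_derive_unique f2 t _ H2). ring.
Qed.

Lemma is_mderive_cosh_sinh f P E t : (forall s, f s = mlin (cosh s) P (sinh s) E) ->
  is_mderive f t (mlin (sinh t) P (cosh t) E).
Proof.
  intros Hf.
  assert (Hd : forall a b,
    is_derive (fun s => cosh s * a + sinh s * b) t (sinh t * a + cosh t * b)).
  { intros a b. unfold cosh, sinh. auto_derive; [exact I | field]. }
  split; [|split]; (eapply is_derive_ext; [intro s; rewrite Hf; reflexivity | apply Hd]).
Qed.

Definition dhyp (z : pt) (a b : R) : mvec :=
  Mvec (a * fst z / snd z + b * (snd z ^ 2 - fst z ^ 2 - 1) / (2 * snd z ^ 2))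
       (a / snd z - b * fst z / snd z ^ 2)
       (a * fst z / snd z + b * (snd z ^ 2 - fst z ^ 2 + 1) / (2 * snd z ^ 2)).

Definition curve_dhyp (g : R -> pt) (s : R) : mvec :=
  dhyp (g s) (Derive (fun t => fst (g t)) s) (Derive (fun t => snd (g t)) s).

Lemma mdot_dhyp_self z a b : inH z ->
  mdot (dhyp z a b) (dhyp z a b) = - ((a ^ 2 + b ^ 2) / snd z ^ 2).
Proof. unfold inH, mdot, dhyp; cbn [m0 m1 m2]. intros. field. lra. Qed.

Lemma mdot_hyp_dhyp z a b : inH z -> mdot (hyp z) (dhyp z a b) = 0.
Proof. unfold inH, mdot, hyp, dhyp; cbn [m0 m1 m2]. intros. field. lra. Qed.

Lemma is_mderive_hyp (g : R -> pt) s :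
  ex_derive (fun t => fst (g t)) s -> ex_derive (fun t => snd (g t)) s -> inH (g s) ->
  is_mderive (fun t => hyp (g t)) s (curve_dhyp g s).
Proof.
  unfold inH, is_mderive, curve_dhyp, dhyp, hyp. cbn [m0 m1 m2].
  set (x := fun t => fst (g t)). set (y := fun t => snd (g t)).
  change (fst (g s)) with (x s). change (snd (g s)) with (y s).
  intros Hx Hy Hs.
  split; [|split];
    [ apply is_derive_ext with (fun t => (x t ^ 2 + y t ^ 2 + 1) / (2 * y t))
    | apply is_derive_ext with (fun t => x t / y t)
    | apply is_derive_ext with (fun t => (x t ^ 2 + y t ^ 2 - 1) / (2 * y t)) ];
    try reflexivity;
    auto_derive; change (fun t => x t) with x; change (fun t => y t) with y;
    first [repeat split; auto; lra | set (dx := Derive x s); set (dy := Derive y s); field; lra].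
Qed.

(** * Busemann functions and horocycles *)

Lemma is_lim_exp_m2 : is_lim (fun t => exp (-2 * t)) p_infty 0.
Proof.
  apply (is_lim_comp exp (fun t => -2 * t) p_infty 0 m_infty).
  - apply is_lim_exp_m.
  - replace m_infty with (Rbar_mult (-2) p_infty).
    + apply (is_lim_scal_l (fun t => t)), is_lim_id.
    + simpl. destruct (Rle_dec 0 (-2)); [exfalso; lra | reflexivity].
  - exists 0. discriminate.
Qed.

(* With [e = exp (-2 t)], [acosh v - t = G e] for a function [G] continuous at [0]. *)
Lemma is_lim_acosh_sub_id A K (v : R -> R) : 0 < A ->
  (forall t, v t = (exp t * A + exp (- t) * K) / 2) -> (forall t, 1 <= v t) ->
  is_lim (fun t => ln (v t + sqrt (v t * v t - 1)) - t) p_infty (ln A).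
Proof.
  intros HA Hv H1.
  pose (G e := ln ((A + e * K) / 2 + sqrt (((A + e * K) / 2) ^ 2 - e))).
  assert (HG0 : G 0 = ln A).
  { unfold G. replace ((A + 0 * K) / 2) with (A / 2) by field.
    rewrite Rminus_0_r, sqrt_pow2 by lra. f_equal. field. }
  assert (HGc : continuous G 0).
  { apply (ex_derive_continuous G 0). unfold G. auto_derive.
    pose proof (sqrt_pos ((A + 0 * K) * / 2 * ((A + 0 * K) * / 2 * 1) + - 0)).
    repeat split; nra. }
  rewrite <- HG0.
  apply is_lim_ext with (fun t => G (exp (-2 * t))).
  2: { apply is_lim_comp_continuous; [apply is_lim_exp_m2 | exact HGc]. }
  intro t. unfold G. specialize (H1 t). specialize (Hv t).
  set (q := v t) in *. clearbody q.
  pose proof (sqrt_pos (q * q - 1)). pose proof (exp_pos (- t)).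
  assert (E1 : exp (-2 * t) = exp (- t) * exp (- t)) by (rewrite <- exp_plus; f_equal; ring).
  assert (E2 : exp (- t) * exp t = 1) by (rewrite <- exp_plus, Rplus_opp_l; apply exp_0).
  assert (E3 : (A + exp (-2 * t) * K) / 2 = exp (- t) * q).
  { rewrite Hv, E1. transitivity ((exp (- t) * exp t * A + exp (- t) * exp (- t) * K) / 2);
      [rewrite E2 | ]; field. }
  rewrite E3, E1.
  replace ((exp (- t) * q) ^ 2 - exp (- t) * exp (- t))
    with ((exp (- t) * exp (- t)) * (q * q - 1)) by ring.
  rewrite sqrt_mult_alt, sqrt_square by nra.
  replace (exp (- t) * q + exp (- t) * sqrt (q * q - 1))
    with (exp (- t) * (q + sqrt (q * q - 1))) by ring.
  rewrite ln_mult, ln_exp by nra. ring.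
Qed.

(* The null vector representing the forward endpoint [c (+oo)]. *)
Definition geodesic_end (c : R -> pt) (E : mvec) : mvec := mlin 1 (hyp (c 0)) 1 E.

Lemma geodesic_end_null c E : geodesic c -> geodesic_frame c E ->
  mdot (geodesic_end c E) (geodesic_end c E) = 0 /\ mdot (hyp (c 0)) (geodesic_end c E) = 1 /\
  0 < m0 (geodesic_end c E).
Proof.
  intros [Hin _] (HEE & HPE & _). pose proof (mdot_hyp_self _ (Hin 0)) as HPP.
  unfold geodesic_end.
  assert (HN : mdot (mlin 1 (hyp (c 0)) 1 E) (mlin 1 (hyp (c 0)) 1 E) = 0)
    by (rewrite !mdot_mlinl, !mdot_mlinr, (mdot_sym E), HPP, HEE, HPE; ring).
  assert (HNP : mdot (hyp (c 0)) (mlin 1 (hyp (c 0)) 1 E) = 1)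
    by (rewrite mdot_mlinr, HPP, HPE; ring).
  split; [exact HN | split; [exact HNP |]].
  apply (null_future _ (hyp (c 0))); [apply hyp_m0_pos, Hin | exact HPP | exact HN |].
  rewrite mdot_sym. exact HNP.
Qed.

Lemma mdot_hyp_geodesic_end_pos c E z : geodesic c -> geodesic_frame c E -> inH z ->
  0 < mdot (hyp z) (geodesic_end c E).
Proof.
  intros Hc HE Hz. destruct (geodesic_end_null c E Hc HE) as (HN & _ & HN0).
  apply mdot_future_null_pos;
    [apply hyp_m0_pos, Hz | apply mdot_hyp_self, Hz | exact HN | exact HN0].
Qed.

Lemma is_lim_hdist_geodesic c E z : geodesic c -> geodesic_frame c E -> inH z ->
  is_lim (fun t => hdist z (c t) - t) p_infty (ln (mdot (hyp z) (geodesic_end c E))).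
Proof.
  intros Hc HE Hz. pose proof Hc as [Hin _].
  pose proof (mdot_hyp_geodesic_end_pos c E z Hc HE Hz) as Hpos.
  destruct HE as (HEE & HPE & Hct). unfold geodesic_end in *.
  apply is_lim_ext with
    (fun t => ln (mdot (hyp z) (hyp (c t))
                  + sqrt (mdot (hyp z) (hyp (c t)) * mdot (hyp z) (hyp (c t)) - 1)) - t).
  { intro t. rewrite hdist_mdot by (apply Hz || apply Hin). reflexivity. }
  apply (is_lim_acosh_sub_id _ (mdot (hyp z) (hyp (c 0)) - mdot (hyp z) E)).
  - exact Hpos.
  - intro t. rewrite Hct, !mdot_mlinr. unfold cosh, sinh. field.
  - intro t. apply one_le_mdot_hyp; [exact Hz | apply Hin].
Qed.

Lemma busemann_hyp c E x : geodesic c -> geodesic_frame c E -> inH x ->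
  busemann c x (c 0) = ln (mdot (hyp x) (geodesic_end c E)).
Proof.
  intros Hc HE Hx. pose proof Hc as [Hin _].
  destruct (geodesic_end_null c E Hc HE) as (_ & HP1 & _).
  unfold busemann.
  rewrite (is_lim_unique _ _ (ln (mdot (hyp x) (geodesic_end c E))
                              - ln (mdot (hyp (c 0)) (geodesic_end c E)))).
  { simpl. rewrite HP1, ln_1. ring. }
  eapply is_lim_ext; [| apply (is_lim_minus' _ _ _ _ _
    (is_lim_hdist_geodesic c E x Hc HE Hx) (is_lim_hdist_geodesic c E (c 0) Hc HE (Hin 0)))].
  intro t. simpl. ring.
Qed.

Lemma horocycle_hyp Hc : horocycle Hc ->
  exists N, mdot N N = 0 /\ 0 < m0 N /\ forall z, Hc z -> inH z /\ mdot (hyp z) N = 1.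
Proof.
  intros [c [Hgeo HHc]]. destruct (geodesic_hyp c Hgeo) as [E HE].
  destruct (geodesic_end_null c E Hgeo HE) as (HN & _ & HN0).
  exists (geodesic_end c E). split; [exact HN | split; [exact HN0 |]].
  intros z Hz. destruct (proj1 (HHc z) Hz) as [Hzin Hb]. split; [exact Hzin |].
  rewrite (busemann_hyp c E z Hgeo HE Hzin) in Hb.
  rewrite <- (exp_ln _ (mdot_hyp_geodesic_end_pos c E z Hgeo HE Hzin)), Hb. apply exp_0.
Qed.

Definition horo_curve (X V N : mvec) (r : R) : mvec := mlin 1 (mlin 1 X r V) (r ^ 2 / 2) N.

Lemma mdot_horo_curve Y X V N r :
  mdot Y (horo_curve X V N r) = mdot Y X + r * mdot Y V + r ^ 2 / 2 * mdot Y N.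
Proof. unfold horo_curve. rewrite !mdot_mlinr. ring. Qed.

Lemma horo_curve_point X V N Y :
  m0 N <> 0 -> mdot N N = 0 -> mdot X X = 1 -> mdot X N = 1 -> mdot V V = -1 ->
  mdot V N = 0 -> mdot X V = 0 -> mdot Y Y = 1 -> mdot Y N = 1 ->
  Y = horo_curve X V N (- mdot Y V).
Proof.
  intros Hn HNN HXX HXN HVV HVN HXV HYY HYN.
  set (r := - mdot Y V). set (g := mdot Y X - 1).
  assert (HY : Y = mlin 1 (mlin 1 X r V) g N).
  { apply mlin_sub_eq0, (null_frame_orth_zero X V N); try assumption;
      rewrite !mdot_mlinl, ?(mdot_sym V X), ?(mdot_sym N X), ?(mdot_sym N V);
      rewrite ?HXX, ?HXN, ?HVV, ?HVN, ?HXV, ?HNN; unfold r, g; lra. }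
  assert (Hg : g = r ^ 2 / 2).
  { rewrite HY in HYY. rewrite !mdot_mlinl, !mdot_mlinr, (mdot_sym V X), (mdot_sym N X),
      (mdot_sym N V), HXX, HXN, HVV, HVN, HXV, HNN in HYY. nra. }
  rewrite HY at 1. rewrite Hg. reflexivity.
Qed.

Section HorocycleParam.

Variables (N : mvec) (h : R -> pt).
Hypothesis HNN : mdot N N = 0.
Hypothesis HN0 : m0 N <> 0.
Hypothesis h_in : forall s, inH (h s).
Hypothesis h_on : forall s, mdot (hyp (h s)) N = 1.
Hypothesis h_speed : forall s,
  ex_derive (fun t => fst (h t)) s /\ ex_derive (fun t => snd (h t)) s /\
  sqrt (Derive (fun t => fst (h t)) s ^ 2 + Derive (fun t => snd (h t)) s ^ 2) = snd (h s).

Lemma is_mderive_horo s : is_mderive (fun t => hyp (h t)) s (curve_dhyp h s).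
Proof. destruct (h_speed s) as (Hx & Hy & _). apply is_mderive_hyp; auto. Qed.

Lemma horo_tangent_unit s : mdot (curve_dhyp h s) (curve_dhyp h s) = -1.
Proof.
  destruct (h_speed s) as (_ & _ & Hsp). pose proof (h_in s) as Hs. unfold inH in Hs.
  unfold curve_dhyp. rewrite mdot_dhyp_self by exact Hs.
  set (a := Derive (fun t => fst (h t)) s) in *. set (b := Derive (fun t => snd (h t)) s) in *.
  assert (Hab : a ^ 2 + b ^ 2 = snd (h s) ^ 2) by (rewrite <- Hsp, pow2_sqrt; nra).
  rewrite Hab. field. lra.
Qed.

Lemma horo_tangent_perp s : mdot (curve_dhyp h s) N = 0.
Proof.
  pose proof (is_mderive_mdot _ _ _ N (is_mderive_horo s)) as Hd.
  apply is_derive_unique in Hd. rewrite <- Hd.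
  rewrite (Derive_ext _ (fun _ => 1)) by apply h_on. apply Derive_const.
Qed.

(* [r t = - <hyp (h t), V>] is the horocyclic coordinate of [h t] relative to [h s0]; its
   derivative is [±1] at every point and [1] at [s0], so [r] is a translation. *)
Lemma horo_param s0 s : hyp (h s) = horo_curve (hyp (h s0)) (curve_dhyp h s0) N (s - s0).
Proof.
  pose proof (horo_tangent_unit s0) as HVV. pose proof (horo_tangent_perp s0) as HVN.
  set (X0 := hyp (h s0)). set (V := curve_dhyp h s0) in *.
  assert (HXV : mdot X0 V = 0) by apply mdot_hyp_dhyp, h_in.
  set (r := fun t => - mdot (hyp (h t)) V).
  assert (Hr : forall t, r t = t - s0).
  { assert (Hd : forall t, is_derive r t (- mdot (curve_dhyp h t) V)).
    { intro t. apply (is_derive_opp (fun t => mdot (hyp (h t)) V)).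
      apply is_mderive_mdot, is_mderive_horo. }
    intro t. rewrite (is_derive_pm1_affine r _ s0 Hd).
    - unfold r at 1. fold X0. rewrite HXV. ring.
    - intro x. cbv beta. pose proof (null_perp_unit_mdot_sq N V (curve_dhyp h x) HN0 HNN HVV HVN
        (horo_tangent_unit x) (horo_tangent_perp x)) as Hsq.
      assert (Hfac : (mdot (curve_dhyp h x) V - 1) * (mdot (curve_dhyp h x) V + 1) = 0) by nra.
      destruct (Rmult_integral _ _ Hfac); [right | left]; lra.
    - cbv beta. fold V. lra. }
  rewrite <- Hr. apply horo_curve_point; try assumption.
  - apply mdot_hyp_self, h_in.
  - apply h_on.
  - apply mdot_hyp_self, h_in.
  - apply h_on.
Qed.

End HorocycleParam.

(** * The winding time *)

Lemma quadratic_shift a b c a' b' c' l :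
  (forall q, a + q * b + q ^ 2 / 2 * c = a' + (q + l) * b' + (q + l) ^ 2 / 2 * c') ->
  a = a' + l * b' + l ^ 2 / 2 * c' /\ b = b' + l * c'.
Proof. intros H. pose proof (H 0). pose proof (H 1). pose proof (H (-1)). split; lra. Qed.

Lemma mdot_winding P E X V N Y t l :
  mdot P P = 1 -> mdot E E = -1 -> mdot P E = 0 ->
  X = mlin (cosh t) P (sinh t) E -> V = mlin (sinh t) P (cosh t) E ->
  mdot X N = 1 -> mdot V N = 0 ->
  (forall q, mdot Y (horo_curve X V N q) = mdot P (horo_curve X V N (q + l))) ->
  mdot Y (mlin 1 P 1 E) = 1 + l + l ^ 2 / 2 * (cosh t * exp (- t)).
Proof.
  intros HPP HEE HPE -> -> HXN HVN HY.
  pose proof (cosh_sq_sub_sinh_sq t) as Hcs.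
  rewrite mdot_mlinl in HXN, HVN.
  assert (HPN : mdot P N = cosh t).
  { transitivity (cosh t * (cosh t * mdot P N + sinh t * mdot E N)
                  - sinh t * (sinh t * mdot P N + cosh t * mdot E N)).
    - transitivity (mdot P N * (cosh t ^ 2 - sinh t ^ 2)); [rewrite Hcs |]; ring.
    - rewrite HXN, HVN. ring. }
  setoid_rewrite mdot_horo_curve in HY.
  destruct (quadratic_shift _ _ _ _ _ _ l HY) as [Ha Hb].
  assert (HPX : mdot P (mlin (cosh t) P (sinh t) E) = cosh t)
    by (rewrite mdot_mlinr, HPP, HPE; ring).
  assert (HPV : mdot P (mlin (sinh t) P (cosh t) E) = sinh t)
    by (rewrite mdot_mlinr, HPP, HPE; ring).
  rewrite HPX, HPV, HPN, !mdot_mlinr in Ha. rewrite HPV, HPN, !mdot_mlinr in Hb.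
  rewrite mdot_mlinr.
  assert (Hexp : cosh t + sinh t = exp t) by (unfold cosh, sinh; field).
  assert (Hinv : exp t * exp (- t) = 1) by (rewrite <- exp_plus, Rplus_opp_r; apply exp_0).
  apply Rmult_eq_reg_l with (exp t); [| apply Rgt_not_eq, exp_pos].
  rewrite <- Hexp at 1.
  replace ((cosh t + sinh t) * (1 * mdot Y P + 1 * mdot Y E))
    with ((cosh t * mdot Y P + sinh t * mdot Y E) + (sinh t * mdot Y P + cosh t * mdot Y E))
    by ring.
  rewrite Ha, Hb.
  replace (exp t * (1 + l + l ^ 2 / 2 * (cosh t * exp (- t))))
    with (exp t * (1 + l) + l ^ 2 / 2 * cosh t * (exp t * exp (- t))) by ring.
  rewrite Hinv, <- Hexp. ring.
Qed.

Lemma Rabs_ln_winding_le l t : 0 <= l -> 0 <= t ->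
  Rabs (ln (1 + l + l ^ 2 / 2 * (cosh t * exp (- t)))) <= l.
Proof.
  intros Hl Ht.
  assert (Hk : 0 < cosh t * exp (- t) <= 1).
  { pose proof (exp_pos (- t)). pose proof (exp_ineq1_le t).
    assert (Hinv : exp t * exp (- t) = 1) by (rewrite <- exp_plus, Rplus_opp_r; apply exp_0).
    replace (cosh t * exp (- t)) with ((1 + exp (- t) * exp (- t)) / 2)
      by (unfold cosh; rewrite <- Hinv at 1; field).
    split; nra. }
  set (Q := 1 + l + l ^ 2 / 2 * (cosh t * exp (- t))).
  assert (HQ1 : 1 <= Q) by (unfold Q; nra).
  assert (HQl : Q <= exp l).
  { pose proof (exp_ge_taylor l 2 Hl) as Ht2. simpl in Ht2. unfold Q. nra. }
  rewrite Rabs_right.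
  - rewrite <- (ln_exp l). apply ln_le; lra.
  - rewrite <- ln_1. apply Rle_ge, ln_le; lra.
Qed.

Lemma tangent_to_frame u h E : geodesic u -> geodesic_frame u E -> tangent_to u h ->
  exists t0 s0, 0 <= t0 /\
    hyp (h s0) = mlin (cosh t0) (hyp (u 0)) (sinh t0) E /\
    curve_dhyp h s0 = mlin (sinh t0) (hyp (u 0)) (cosh t0) E.
Proof.
  intros [Hin _] (_ & _ & Hu) (t0 & s0 & Ht0 & Hus & Hdx & Hdy & Hex & Hey).
  exists t0, s0. split; [exact Ht0 | split].
  - rewrite <- Hus. apply Hu.
  - replace (curve_dhyp h s0) with (curve_dhyp u t0)
      by (unfold curve_dhyp; rewrite Hus, Hex, Hey; reflexivity).
    apply (is_mderive_unique (fun t => hyp (u t)) t0).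
    + apply is_mderive_hyp; [exact Hdx | exact Hdy | apply Hin].
    + apply is_mderive_cosh_sinh, Hu.
Qed.

Theorem mainTheorem3 (Hc : pt -> Prop) (p : pt -> pt) (h : R -> pt) (l : R)
    (u : R -> pt) (w : pt) :
  horocycle Hc -> parabolic p -> preserves p Hc ->
  pos_oriented_param Hc p h l ->
  geodesic u -> tangent_to u h ->
  inH w -> p w = u 0 ->
  Rabs (winding_time u w) <= l.
Proof.
  intros Hhoro [[_ [_ Hp_iso]] _] _ [[Hh_on [_ [_ Hh_speed]]] [Hl Hp_shift]] Hu Htan Hw Hpw.
  destruct (horocycle_hyp Hc Hhoro) as (N & HNN & HN0 & HN).
  assert (Hh_in : forall s, inH (h s)) by (intro s; apply (HN _ (Hh_on s))).
  assert (Hh_N : forall s, mdot (hyp (h s)) N = 1) by (intro s; apply (HN _ (Hh_on s))).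
  destruct (geodesic_hyp u Hu) as [E HE]. pose proof Hu as [Hu_in _].
  destruct (tangent_to_frame u h E Hu HE Htan) as (t0 & s0 & Ht0 & HX & HV).
  pose proof (horo_param N h HNN (Rgt_not_eq _ _ HN0) Hh_in Hh_N Hh_speed s0) as Hpar.
  unfold winding_time. rewrite (busemann_hyp u E w Hu HE Hw). unfold geodesic_end.
  destruct HE as (HEE & HPE & _).
  rewrite (mdot_winding (hyp (u 0)) E (hyp (h s0)) (curve_dhyp h s0) N (hyp w) t0 l);
    try assumption.
  - apply Rabs_ln_winding_le; assumption.
  - apply mdot_hyp_self, Hu_in.
  - apply Hh_N.
  - apply horo_tangent_perp; assumption.
  - intro q. rewrite <- (Rplus_minus_l s0 q) at 1.
    replace (q + l) with (s0 + q + l - s0) by ring.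
    rewrite <- !Hpar, <- !cosh_hdist, <- Hpw, <- Hp_shift by auto.
    rewrite Hp_iso by auto. reflexivity.
Qed.
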